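(* Let $n\ge0$ be an integer and let $B^*$ be the unique positive zero of $B\mapsto(2n+1)-BF'_{2n+1}(B)/F_{2n+1}(B)$. Then $B^*\ge\sqrt{n}$.
   Context: For $q>0$, $F_q(y):=\int_0^\infty u^{q-1}e^{yu-u^2/2}\,\mathrm{d}u$ for $y\in\mathbb{R}$. It is known that the function $B\mapsto(2n+1)-BF'_{2n+1}(B)/F_{2n+1}(B)$ is strictly decreasing with a unique zero $B^*>0$. Moreover, $\frac{\partial}{\partial B}\frac{B^{2n+1}}{F_{2n+1}(B)}>0$ if and only if $B<B^*$. *)

From Stdlib Require Import Reals.
From Coquelicot Require Import Coquelicot.
Open Scope R_scope.

(* F_q(y) := \int_0^\infty u^(q-1) e^(y u - u^2/2) du  (improper Riemann integral).
   u^(q-1) is Rpower u (q-1) (the value at the single point u = 0 is irrelevant). *)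
Definition F (q y : R) : R :=
  RInt_gen (fun u => Rpower u (q - 1) * exp (y * u - u ^ 2 / 2))
           (at_point 0) (Rbar_locally p_infty).

From Stdlib Require Import Reals Lra Psatz.
From Coquelicot Require Import Coquelicot.
Open Scope R_scope.

(* Write G_k(y) for the moment integral of u^k e^(y u - u^2/2) over [0, oo), so that
   F_(2n+1) = G_(2n).  Differentiating under the integral gives G_k' = G_(k+1),
   integration by parts gives G_(k+2) = (k+1) G_k + y G_(k+1), and Cauchy-Schwarz gives
   G_(k+1)^2 <= G_k G_(k+2).  At a zero B we have B G_(2n+1) = (2n+1) G_(2n), so the
   recurrence yields G_(2n+2) = 2 (2n+1) G_(2n), and Cauchy-Schwarz becomes
   (2n+1)^2 / B^2 <= 2 (2n+1), i.e. B^2 >= n + 1/2. *)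

Local Notation at0 := (at_point 0).
Local Notation at_infty := (Rbar_locally p_infty).

Lemma pow_le_exp_mul k x : 0 <= x -> x ^ k <= exp (INR k * x).
Proof.
  intros Hx; induction k as [|k IH].
  - rewrite Rmult_0_l, exp_0; simpl; lra.
  - rewrite S_INR, Rmult_plus_distr_r, Rmult_1_l, Rplus_comm, exp_plus; simpl.
    apply Rmult_le_compat; [lra | apply pow_le; lra | | exact IH].
    pose proof (exp_ineq1_le x); lra.
Qed.

Lemma mean_value_at0 (f df : R -> R) t :
  (forall c, is_derive f c (df c)) -> exists c, Rabs c <= Rabs t /\ f t - f 0 = df c * t.
Proof.
  intros Hd.
  destruct (MVT_cor4 f df 0 (Rabs (t - 0)) (fun c _ => Hd c) t (Rle_refl _))
    as [c [E Hc]].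
  exists c; rewrite !Rminus_0_r in *; split; assumption.
Qed.

Lemma exp_le_exp x y : x <= y -> exp x <= exp y.
Proof. intros [H | ->]; [left; now apply exp_increasing | apply Rle_refl]. Qed.

Lemma exp_le_exp_abs a b : Rabs a <= Rabs b -> exp a <= exp (Rabs b).
Proof.
  intros H; apply exp_le_exp; pose proof (Rle_abs a); lra.
Qed.

Lemma abs_exp_sub1_le s : Rabs (exp s - 1) <= Rabs s * exp (Rabs s).
Proof.
  destruct (mean_value_at0 exp exp s) as [c [Hc E]].
  { intros c; apply is_derive_Reals, derivable_pt_lim_exp. }
  rewrite exp_0 in E; rewrite E, Rabs_mult, (Rabs_pos_eq (exp c)) by (left; apply exp_pos).
  rewrite Rmult_comm; apply Rmult_le_compat_l; [apply Rabs_pos | now apply exp_le_exp_abs].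
Qed.

Lemma abs_exp_sub1_sub_le t : Rabs (exp t - 1 - t) <= t ^ 2 * exp (Rabs t).
Proof.
  destruct (mean_value_at0 (fun s => exp s - 1 - s) (fun s => exp s - 1) t) as [c [Hc E]].
  { intros c; auto_derive; [easy |]. ring. }
  rewrite exp_0, !Rminus_0_r, Rminus_diag, Rminus_0_r in E; rewrite E, Rabs_mult.
  pose proof (abs_exp_sub1_le c) as Hexp_c.
  assert (Hmono : exp (Rabs c) <= exp (Rabs t)) by (apply exp_le_exp; exact Hc).
  pose proof (Rabs_pos c); pose proof (Rabs_pos t); pose proof (exp_pos (Rabs c)).
  rewrite <- (pow2_abs t).
  apply Rle_trans with (Rabs c * exp (Rabs c) * Rabs t);
    [apply Rmult_le_compat_r; [apply Rabs_pos | exact Hexp_c] |].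
  apply Rle_trans with (Rabs t * exp (Rabs t) * Rabs t); [| right; ring].
  apply Rmult_le_compat_r; [| apply Rmult_le_compat]; lra.
Qed.

Lemma mul_exp_neg_lt C eps u : 0 <= C -> 0 < eps -> C / eps < u -> C * exp (- u) < eps.
Proof.
  intros HC He Hu.
  pose proof (exp_ineq1_le u); pose proof (exp_pos u).
  rewrite exp_Ropp; apply Rmult_lt_reg_r with (exp u); [assumption |].
  rewrite Rmult_assoc, Rinv_l by lra.
  apply Rmult_lt_compat_l with (r := eps) in Hu; [| assumption].
  replace (eps * (C / eps)) with C in Hu by (field; lra); nra.
Qed.

Lemma filter_prod_at0_infty (P : R -> R -> Prop) :
  (forall b, 0 < b -> P 0 b) -> filter_prod at0 at_infty (fun ab => P (fst ab) (snd ab)).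
Proof.
  intros HP; apply (Filter_prod _ _ _ (fun a => a = 0) (fun b => 0 < b)).
  - reflexivity.
  - exists 0; auto.
  - intros a b -> Hb; exact (HP b Hb).
Qed.

Lemma abs_is_RInt_gen_le (f g : R -> R) lf lg :
  (forall x, 0 <= x -> Rabs (f x) <= g x) ->
  is_RInt_gen f at0 at_infty lf -> is_RInt_gen g at0 at_infty lg -> Rabs lf <= lg.
Proof.
  intros Hfg Hf Hg.
  apply (@RInt_gen_norm R_CompleteNormedModule at0 at_infty _ _ f g lf lg); try assumption.
  - apply (filter_prod_at0_infty (fun a b => a <= b)); intros; lra.
  - apply (filter_prod_at0_infty (fun a b => forall x, a <= x <= b -> Rabs (f x) <= g x)).
    intros b _ x Hx; apply Hfg; lra.
Qed.

Lemma is_RInt_gen_ge0 (f : R -> R) l :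
  (forall x, 0 <= x -> 0 <= f x) -> is_RInt_gen f at0 at_infty l -> 0 <= l.
Proof.
  intros Hf Hl.
  assert (Habs : Rabs l <= l).
  { apply (abs_is_RInt_gen_le f f); try assumption.
    intros x Hx; rewrite Rabs_pos_eq by (now apply Hf); lra. }
  pose proof (Rabs_pos l); lra.
Qed.

Lemma is_RInt_gen_of_lim (f : R -> R) L :
  (forall b, ex_RInt f 0 b) -> filterlim (fun b => RInt f 0 b) at_infty (locally L) ->
  is_RInt_gen f at0 at_infty L.
Proof.
  intros Hex Hlim P HP.
  apply (Filter_prod _ _ _ (fun a => a = 0) (fun b => P (RInt f 0 b))).
  - reflexivity.
  - exact (Hlim P HP).
  - intros a b -> Hb; exists (RInt f 0 b); split; [| exact Hb].
    apply (@RInt_correct R_CompleteNormedModule), Hex.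
Qed.

Definition exp_dominated (f : R -> R) (C : R) : Prop :=
  forall x, 0 <= x -> Rabs (f x) <= C * exp (- x).

Section ExpDominated.

Variables (f : R -> R) (C : R).
Hypothesis f_cont : forall x, continuous f x.
Hypothesis f_dom : exp_dominated f C.

Lemma exp_dominated_ge0 : 0 <= C.
Proof.
  pose proof (f_dom 0 (Rle_refl 0)) as H0.
  rewrite Ropp_0, exp_0, Rmult_1_r in H0; pose proof (Rabs_pos (f 0)); lra.
Qed.

Lemma ex_RInt_of_cont (a b : R) : ex_RInt f a b.
Proof. apply (@ex_RInt_continuous R_CompleteNormedModule); intros; apply f_cont. Qed.

Lemma exp_dominated_lim_infty : filterlim f at_infty (locally 0).
Proof.
  intros P [eps HP]; pose proof exp_dominated_ge0.
  exists (C / eps); intros u Hu; apply HP.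
  assert (0 <= C / eps) by (apply Rdiv_le_0_compat; [lra | apply cond_pos]).
  change (Rabs (f u - 0) < eps); rewrite Rminus_0_r.
  eapply Rle_lt_trans; [apply f_dom; lra | apply mul_exp_neg_lt; [lra | apply cond_pos | lra]].
Qed.

Lemma abs_RInt_exp_dominated_le u v : 0 <= u <= v -> Rabs (RInt f u v) <= C * exp (- u).
Proof.
  intros Huv; pose proof exp_dominated_ge0.
  assert (Hexp : is_RInt (fun x => C * exp (- x)) u v (C * exp (- u) - C * exp (- v))).
  { replace (C * exp (- u) - C * exp (- v)) with (minus (- C * exp (- v)) (- C * exp (- u)))
      by (unfold minus, plus, opp; simpl; ring).
    apply (is_RInt_derive (fun x => - C * exp (- x))).
    - intros x _; auto_derive; [easy | ring].
    - intros x _; apply (@ex_derive_continuous R_AbsRing R_NormedModule); auto_derive; easy. }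
  eapply Rle_trans; [apply abs_RInt_le; [lra | apply ex_RInt_of_cont] |].
  eapply Rle_trans; [apply RInt_le with (g := fun x => C * exp (- x)) |].
  - lra.
  - apply (@ex_RInt_continuous R_CompleteNormedModule); intros z _.
    apply (continuous_comp f Rabs); [apply f_cont | apply continuous_Rabs].
  - eexists; exact Hexp.
  - intros x Hx; apply f_dom; lra.
  - rewrite (is_RInt_unique _ _ _ _ Hexp); pose proof (exp_pos (- v)); nra.
Qed.

(* Cauchy criterion: the tails beyond [u] are at most [C e^{-u}]. *)
Lemma ex_RInt_gen_exp_dominated : ex_RInt_gen f at0 at_infty.
Proof.
  pose proof exp_dominated_ge0.
  destruct (proj1 (filterlim_locally_cauchy (F := at_infty) (fun b => RInt f 0 b))) as [L HL].
  - intros eps; pose proof (cond_pos eps).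
    assert (0 <= C / eps) by (apply Rdiv_le_0_compat; lra).
    assert (Htail : forall u v, C / eps < u -> u <= v -> Rabs (RInt f 0 v - RInt f 0 u) < eps).
    { intros u v Hu Huv.
      replace (RInt f 0 v - RInt f 0 u) with (RInt f u v).
      2:{ rewrite <- (RInt_Chasles f 0 u v) by apply ex_RInt_of_cont.
          unfold plus; simpl; unfold Rminus.
          rewrite (Rplus_comm (RInt f 0 u)), Rplus_assoc, Rplus_opp_r, Rplus_0_r; reflexivity. }
      eapply Rle_lt_trans; [apply abs_RInt_exp_dominated_le; lra |].
      apply mul_exp_neg_lt; lra. }
    exists (fun u => C / eps < u); split; [exists (C / eps); auto |].
    intros u v Hu Hv; change (Rabs (RInt f 0 v - RInt f 0 u) < eps).
    destruct (Rle_dec u v); [now apply Htail |].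
    rewrite Rabs_minus_sym; apply Htail; lra.
  - exists L; apply is_RInt_gen_of_lim; [intros; apply ex_RInt_of_cont | exact HL].
Qed.

End ExpDominated.

Lemma sq_le_of_quadratic_ge0 a b c :
  0 <= a -> (forall d, 0 <= d ^ 2 * a - 2 * d * b + c) -> b ^ 2 <= a * c.
Proof.
  intros [Ha | <-] Hq.
  - specialize (Hq (b / a)).
    assert (Hac : 0 <= ((b / a) ^ 2 * a - 2 * (b / a) * b + c) * a) by (apply Rmult_le_pos; lra).
    replace (((b / a) ^ 2 * a - 2 * (b / a) * b + c) * a) with (a * c - b ^ 2) in Hac
      by (field; lra).
    lra.
  - destruct (Req_dec b 0) as [-> | Hb]; [simpl; lra |].
    pose proof (Hq ((c + 1) / (2 * b))) as Hcontra.
    replace (((c + 1) / (2 * b)) ^ 2 * 0 - 2 * ((c + 1) / (2 * b)) * b + c) with (- 1) in Hcontra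
      by (field; exact Hb).
    lra.
Qed.

Lemma is_derive_of_quadratic_remainder (f : R -> R) y l K :
  0 <= K -> (forall h, Rabs h <= 1 -> Rabs (f (y + h) - f y - h * l) <= K * h ^ 2) ->
  is_derive f y l.
Proof.
  intros HK Hrem; apply is_derive_Reals; intros eps Heps.
  assert (Hdelta : 0 < Rmin 1 (eps / (K + 1)))
    by (apply Rmin_pos; [lra | apply Rdiv_lt_0_compat; lra]).
  exists (mkposreal _ Hdelta); intros h Hh0 Hh; simpl in Hh.
  assert (H1 : Rabs h <= 1) by (pose proof (Rmin_l 1 (eps / (K + 1))); lra).
  assert (H2 : Rabs h * (K + 1) < eps).
  { assert (Hh' : Rabs h < eps / (K + 1)) by (pose proof (Rmin_r 1 (eps / (K + 1))); lra).
    apply Rmult_lt_compat_r with (r := K + 1) in Hh'; [| lra].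
    replace (eps / (K + 1) * (K + 1)) with eps in Hh' by (field; lra).
    exact Hh'. }
  pose proof (Hrem h H1) as Hr; pose proof (Rabs_pos_lt h Hh0) as Hpos.
  replace ((f (y + h) - f y) / h - l) with ((f (y + h) - f y - h * l) / h) by (field; exact Hh0).
  unfold Rdiv; rewrite Rabs_mult, Rabs_inv.
  apply Rmult_lt_reg_r with (Rabs h); [exact Hpos |].
  rewrite Rmult_assoc, Rinv_l by lra.
  rewrite <- (pow2_abs h) in Hr; nra.
Qed.

Definition moment_integrand (k : nat) (y u : R) : R := u ^ k * exp (y * u - u ^ 2 / 2).

Definition moment (k : nat) (y : R) : R := RInt_gen (moment_integrand k y) at0 at_infty.

Lemma continuous_moment_integrand k y x : continuous (moment_integrand k y) x.
Proof.
  apply (@ex_derive_continuous R_AbsRing R_NormedModule); unfold moment_integrand.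
  auto_derive; easy.
Qed.

Lemma moment_integrand_ge0 k y x : 0 <= x -> 0 <= moment_integrand k y x.
Proof.
  intros Hx; apply Rmult_le_pos; [now apply pow_le | left; apply exp_pos].
Qed.

Lemma moment_integrand_exp_dominated k y :
  exp_dominated (moment_integrand k y) (exp ((INR k + y + 1) ^ 2 / 2)).
Proof.
  intros x Hx; unfold moment_integrand.
  rewrite Rabs_pos_eq by (apply moment_integrand_ge0, Hx).
  apply Rle_trans with (exp (INR k * x) * exp (y * x - x ^ 2 / 2)).
  - apply Rmult_le_compat_r; [left; apply exp_pos | now apply pow_le_exp_mul].
  - rewrite <- !exp_plus; apply exp_le_exp.
    assert (Hsq : (INR k + y + 1) ^ 2 / 2 + - x - (INR k * x + (y * x - x ^ 2 / 2))
                  = (x - (INR k + y + 1)) ^ 2 / 2) by field.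
    pose proof (pow2_ge_0 (x - (INR k + y + 1))); lra.
Qed.

Lemma is_RInt_gen_moment k y : is_RInt_gen (moment_integrand k y) at0 at_infty (moment k y).
Proof.
  destruct (ex_RInt_gen_exp_dominated _ _ (continuous_moment_integrand k y)
              (moment_integrand_exp_dominated k y)) as [L HL].
  unfold moment; rewrite (is_RInt_gen_unique _ _ HL); exact HL.
Qed.

Lemma moment_ge0 k y : 0 <= moment k y.
Proof.
  apply (is_RInt_gen_ge0 (moment_integrand k y));
    [apply moment_integrand_ge0 | apply is_RInt_gen_moment].
Qed.

Lemma F_odd_eq_moment n y : F (INR (2 * n + 1)) y = moment (2 * n) y.
Proof.
  unfold F; apply is_RInt_gen_unique.
  apply (is_RInt_gen_ext (moment_integrand (2 * n) y)); [| apply is_RInt_gen_moment].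
  apply (filter_prod_at0_infty (fun a b => forall x, Rmin a b < x < Rmax a b ->
    moment_integrand (2 * n) y x = Rpower x (INR (2 * n + 1) - 1) * exp (y * x - x ^ 2 / 2))).
  intros b Hb x Hx; rewrite Rmin_left, Rmax_right in Hx by lra.
  unfold moment_integrand; rewrite plus_INR, INR_1, Rplus_minus_r, Rpower_pow by lra.
  reflexivity.
Qed.

Lemma is_derive_moment_integrand (k : nat) (y u : R) :
  is_derive (moment_integrand (k + 1) y) u
    (INR (k + 1) * moment_integrand k y u + y * moment_integrand (k + 1) y u
     - moment_integrand (k + 2) y u).
Proof.
  unfold moment_integrand; auto_derive; [easy |].
  replace (k + 1)%nat with (S k) by lia; replace (k + 2)%nat with (S (S k)) by lia.
  cbn [Init.Nat.pred pow].
  replace (y * u + - (u * (u * 1) * / 2)) with (y * u - u * (u * 1) / 2)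
    by (unfold Rminus, Rdiv; ring).
  field.
Qed.

(* Integration by parts: [u^(k+1) e^(y u - u^2/2)] vanishes at [0] and at infinity. *)
Lemma moment_recurrence k y :
  moment (k + 2) y = INR (k + 1) * moment k y + y * moment (k + 1) y.
Proof.
  set (df := fun u => INR (k + 1) * moment_integrand k y u + y * moment_integrand (k + 1) y u
                      - moment_integrand (k + 2) y u).
  assert (Hlin : is_RInt_gen df at0 at_infty
                   (INR (k + 1) * moment k y + y * moment (k + 1) y - moment (k + 2) y)).
  { exact (is_RInt_gen_minus _ _ _ _
             (is_RInt_gen_plus _ _ _ _
                (is_RInt_gen_scal _ (INR (k + 1)) _ (is_RInt_gen_moment k y))
                (is_RInt_gen_scal _ y _ (is_RInt_gen_moment (k + 1) y)))
             (is_RInt_gen_moment (k + 2) y)). }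
  assert (Hftc : is_RInt_gen df at0 at_infty (0 - 0)).
  { apply (is_RInt_gen_ext (Derive (moment_integrand (k + 1) y))).
    { apply filter_forall; intros ab x _; apply is_derive_unique, is_derive_moment_integrand. }
    apply is_RInt_gen_Derive.
    - apply filter_forall; intros ab x _; eexists; apply is_derive_moment_integrand.
    - apply filter_forall; intros ab x _.
      apply (continuous_ext df).
      { intros u; symmetry; apply is_derive_unique, is_derive_moment_integrand. }
      apply (@ex_derive_continuous R_AbsRing R_NormedModule); unfold df, moment_integrand.
      auto_derive; easy.
    - intros P HP; unfold filtermap, at_point.
      replace (moment_integrand (k + 1) y 0) with 0
        by (unfold moment_integrand; rewrite pow_i by lia; ring).
      now apply locally_singleton.
    - exact (exp_dominated_lim_infty _ _ (moment_integrand_exp_dominated (k + 1) y)). }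
  pose proof (eq_trans (eq_sym (is_RInt_gen_unique _ _ Hlin)) (is_RInt_gen_unique _ _ Hftc)).
  lra.
Qed.

Lemma moment_sq_le (k : nat) (y : R) : moment (k + 1) y ^ 2 <= moment k y * moment (k + 2) y.
Proof.
  apply sq_le_of_quadratic_ge0; [apply moment_ge0 | intros d].
  assert (Hsquare : forall u : R,
             d ^ 2 * moment_integrand k y u - 2 * d * moment_integrand (k + 1) y u
             + moment_integrand (k + 2) y u = (u - d) ^ 2 * moment_integrand k y u)
    by (intros u; unfold moment_integrand; rewrite !pow_add; ring).
  apply (is_RInt_gen_ge0 (fun u => (u - d) ^ 2 * moment_integrand k y u)).
  - intros x Hx; apply Rmult_le_pos; [apply pow2_ge_0 | now apply moment_integrand_ge0].
  - apply (is_RInt_gen_ext _ _ _ (filter_forall _ (fun _ u _ => Hsquare u))).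
    exact (is_RInt_gen_plus _ _ _ _
             (is_RInt_gen_minus _ _ _ _
                (is_RInt_gen_scal _ (d ^ 2) _ (is_RInt_gen_moment k y))
                (is_RInt_gen_scal _ (2 * d) _ (is_RInt_gen_moment (k + 1) y)))
             (is_RInt_gen_moment (k + 2) y)).
Qed.

Lemma moment_integrand_increment_le (k : nat) (y h x : R) :
  Rabs h <= 1 -> 0 <= x ->
  Rabs (moment_integrand k (y + h) x - moment_integrand k y x - h * moment_integrand (k + 1) y x)
  <= h ^ 2 * moment_integrand (k + 2) (y + 1) x.
Proof.
  intros Hh Hx; unfold moment_integrand.
  set (E := exp (y * x - x ^ 2 / 2)).
  assert (HE : 0 < E) by apply exp_pos.
  assert (Hxk : 0 <= x ^ k) by (now apply pow_le).
  replace (exp ((y + h) * x - x ^ 2 / 2)) with (E * exp (h * x))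
    by (unfold E; rewrite <- exp_plus; f_equal; ring).
  replace (exp ((y + 1) * x - x ^ 2 / 2)) with (E * exp x)
    by (unfold E; rewrite <- exp_plus; f_equal; ring).
  replace (x ^ k * (E * exp (h * x)) - x ^ k * E - h * (x ^ (k + 1) * E))
    with ((x ^ k * E) * (exp (h * x) - 1 - h * x)) by (rewrite pow_add; ring).
  rewrite Rabs_mult, (Rabs_pos_eq (x ^ k * E)) by (apply Rmult_le_pos; lra).
  apply Rle_trans with ((x ^ k * E) * ((h * x) ^ 2 * exp (Rabs (h * x)))).
  - apply Rmult_le_compat_l; [apply Rmult_le_pos; lra | apply abs_exp_sub1_sub_le].
  - assert (exp (Rabs (h * x)) <= exp x).
    { apply exp_le_exp; rewrite Rabs_mult, (Rabs_pos_eq x) by lra.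
      pose proof (Rabs_pos h); nra. }
    replace (h ^ 2 * (x ^ (k + 2) * (E * exp x))) with ((x ^ k * E) * ((h * x) ^ 2 * exp x))
      by (rewrite pow_add; ring).
    apply Rmult_le_compat_l; [apply Rmult_le_pos; lra |].
    apply Rmult_le_compat_l; [apply pow2_ge_0 | assumption].
Qed.

Lemma moment_increment_le (k : nat) (y h : R) :
  Rabs h <= 1 ->
  Rabs (moment k (y + h) - moment k y - h * moment (k + 1) y) <= moment (k + 2) (y + 1) * h ^ 2.
Proof.
  intros Hh; rewrite (Rmult_comm (moment _ _) (h ^ 2)).
  apply (abs_is_RInt_gen_le
           (fun x => moment_integrand k (y + h) x - moment_integrand k y x
                     - h * moment_integrand (k + 1) y x)
           (fun x => h ^ 2 * moment_integrand (k + 2) (y + 1) x)).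
  - intros x Hx; now apply moment_integrand_increment_le.
  - exact (is_RInt_gen_minus _ _ _ _
             (is_RInt_gen_minus _ _ _ _ (is_RInt_gen_moment k (y + h)) (is_RInt_gen_moment k y))
             (is_RInt_gen_scal _ h _ (is_RInt_gen_moment (k + 1) y))).
  - exact (is_RInt_gen_scal _ (h ^ 2) _ (is_RInt_gen_moment (k + 2) (y + 1))).
Qed.

Lemma is_derive_moment (k : nat) (y : R) : is_derive (moment k) y (moment (k + 1) y).
Proof.
  exact (is_derive_of_quadratic_remainder _ _ _ _ (moment_ge0 (k + 2) (y + 1))
           (moment_increment_le k y)).
Qed.

Lemma moment_critical_point_bound (k : nat) (B : R) :
  0 < B -> 0 < moment k B -> B * moment (k + 1) B = INR (k + 1) * moment k B ->
  INR (k + 1) <= 2 * (B * B).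
Proof.
  intros HB Ha Hcrit.
  pose proof (moment_recurrence k B) as Hrec; pose proof (moment_sq_le k B) as Hcs.
  set (q := INR (k + 1)) in *; set (a := moment k B) in *.
  set (b := moment (k + 1) B) in *; set (c := moment (k + 2) B) in *.
  assert (Hq : 0 < q) by (unfold q; rewrite plus_INR, INR_1; pose proof (pos_INR k); lra).
  assert (Hsq : (q * a) ^ 2 <= 2 * q * a ^ 2 * (B * B)).
  { rewrite <- Hcrit; apply Rle_trans with (B * B * (a * c)).
    - replace ((B * b) ^ 2) with (B * B * b ^ 2) by ring.
      apply Rmult_le_compat_l; [nra | exact Hcs].
    - rewrite Hrec, Hcrit; right; ring. }
  assert (Hapos : 0 < a ^ 2 * q) by (apply Rmult_lt_0_compat; [apply pow2_gt_0 |]; lra).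
  nra.
Qed.

Theorem lemma2p1 (n : nat) (B : R) :
  0 < B ->
  INR (2 * n + 1) - B * Derive (F (INR (2 * n + 1))) B / F (INR (2 * n + 1)) B = 0 ->
  sqrt (INR n) <= B.
Proof.
  intros HB Hzero.
  rewrite (Derive_ext _ _ B (F_odd_eq_moment n)), F_odd_eq_moment,
    (is_derive_unique _ _ _ (is_derive_moment (2 * n) B)) in Hzero.
  assert (Hq : INR (2 * n + 1) = 2 * INR n + 1) by (rewrite plus_INR, mult_INR; simpl; ring).
  pose proof (pos_INR n).
  assert (Ha0 : moment (2 * n) B <> 0).
  { intros Ha0; rewrite Ha0 in Hzero; unfold Rdiv in Hzero; rewrite Rinv_0 in Hzero; lra. }
  assert (Hcrit : B * moment (2 * n + 1) B = INR (2 * n + 1) * moment (2 * n) B).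
  { replace (B * moment (2 * n + 1) B)
      with (B * moment (2 * n + 1) B / moment (2 * n) B * moment (2 * n) B) by (field; exact Ha0).
    f_equal; lra. }
  pose proof (moment_ge0 (2 * n) B).
  pose proof (moment_critical_point_bound (2 * n) B HB ltac:(lra) Hcrit).
  rewrite <- (sqrt_square B) by lra; apply sqrt_le_1_alt; lra.
Qed.
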